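(* For every finite set $I$ of positive integers, $d(I;0)=(-1)^{\#I}$, where $d(I;z)$ denotes the descent polynomial evaluated at $z=0$.
   Context: For a finite set $I$ of positive integers with $m=\max(I\cup\{0\})$, and $n>m$, $d(I;n)$ is the number of permutations $\pi\in\mathfrak S_n$ with descent set $\{i\mid\pi_i>\pi_{i+1}\}$ equal to $I$. This is a polynomial in $n$, and $d(I;z)$ denotes that polynomial evaluated at an arbitrary complex number $z$. *)

From HB Require Import structures.
From mathcomp Require Import all_boot all_order all_algebra all_fingroup.
Set Implicit Arguments. Unset Strict Implicit. Unset Printing Implicit Defensive.
Import GRing.Theory Num.Theory.

(* One-line notation of s : 'S_n as the sequence pi_1 ... pi_n
   (stored 0-based: entry j-1 of the list is pi_j, values in 0..n-1,
   which does not affect comparisons). *)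
Definition perm_word n (s : 'S_n) : seq nat := [seq val (s i) | i <- enum 'I_n].

Definition des_set n (s : 'S_n) : seq nat :=
  let w := perm_word s in
  [seq i <- iota 1 n.-1 | nth 0 w i.-1 > nth 0 w i].

(* A finite set I of positive integers is represented by the strictly
   increasing list of its elements. *)
Definition des_count (I : seq nat) (n : nat) : nat :=
  #|[pred s : 'S_n | des_set s == I]|.

Definition maxI (I : seq nat) : nat := \max_(i <- I) i.

From HB Require Import structures.
From mathcomp Require Import all_boot all_order all_algebra all_fingroup zify.
Set Implicit Arguments. Unset Strict Implicit. Unset Printing Implicit Defensive.

(* For m > max J, both sides of  d(J u {m}; n) + d(J; n) = C(n, m) d(J; m)
   count the permutations whose first m letters have descent set J and whose
   last n - m letters increase: such a permutation is determined by the set of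
   its first m values and by their relative order.  Hence
     d(J u {m}; z) = d(J; m) / m! * z (z - 1) ... (z - m + 1) - d(J; z),
   and since m > 0 the falling factorial vanishes at z = 0, so the value at 0
   changes sign with each new element, starting from d(empty; n) = 1. *)

Definition descents (w : seq nat) : seq nat :=
  [seq i <- iota 1 (size w).-1 | nth 0 w i.-1 > nth 0 w i].

Lemma size_perm_word n (s : 'S_n) : size (perm_word s) = n.
Proof. by rewrite size_map size_enum_ord. Qed.

Lemma des_set_descents n (s : 'S_n) : des_set s = descents (perm_word s).
Proof. by rewrite /des_set /descents size_perm_word. Qed.

Lemma nth_perm_word n (s : 'S_n) (i : 'I_n) : nth 0 (perm_word s) i = val (s i).
Proof. by rewrite (nth_map i) ?size_enum_ord // nth_ord_enum. Qed.

Lemma perm_word_inj n : injective (@perm_word n).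
Proof.
by move=> s t st; apply/permP => i; apply: val_inj; rewrite -!nth_perm_word st.
Qed.

Lemma perm_word_iota n (s : 'S_n) : perm_eq (perm_word s) (iota 0 n).
Proof.
rewrite /perm_word -val_enum_ord (map_comp val s); apply: perm_map.
apply: uniq_perm; rewrite ?(map_inj_uniq (@perm_inj _ s)) ?enum_uniq //.
move=> x; rewrite mem_enum; apply/mapP; exists ((s^-1)%g x); rewrite ?permKV //.
by rewrite mem_enum.
Qed.

Lemma perm_word_onto n (w : seq nat) :
  perm_eq w (iota 0 n) -> exists s : 'S_n, perm_word s = w.
Proof.
move=> pw; have sw : size w = n by rewrite (perm_size pw) size_iota.
have lt_w i : i < n -> nth 0 w i < n.
  move=> lt_in; have : nth 0 w i \in iota 0 n by rewrite -(perm_mem pw) mem_nth ?sw.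
  by rewrite mem_iota.
pose f (i : 'I_n) : 'I_n := Ordinal (lt_w i (ltn_ord i)).
have f_inj : injective f.
  move=> i j [] /eqP; rewrite nth_uniq ?sw ?(perm_uniq pw) ?iota_uniq //.
  by move/eqP/val_inj.
exists (perm f_inj); apply: (@eq_from_nth _ 0); rewrite size_perm_word ?sw // => i lt_in.
by rewrite (nth_perm_word _ (Ordinal lt_in)) permE.
Qed.

Lemma perm_eq_perm_words n :
  perm_eq (map (@perm_word n) (enum 'S_n)) (permutations (iota 0 n)).
Proof.
apply: uniq_perm; rewrite ?permutations_uniq //.
  by rewrite (map_inj_uniq (@perm_word_inj n)) enum_uniq.
move=> w; rewrite mem_permutations; apply/mapP/idP => [[s _ ->]|].
  exact: perm_word_iota.
by case/perm_word_onto => s <-; exists s; rewrite ?mem_enum.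
Qed.

Lemma des_count_permutations I n :
  des_count I n = count (fun w => descents w == I) (permutations (iota 0 n)).
Proof.
rewrite -(seq.permP (perm_eq_perm_words n)) count_map /des_count cardE.
rewrite /enum_mem size_filter (eq_filter (a2 := predT)) // filter_predT.
by apply: eq_count => s; rewrite /= inE des_set_descents.
Qed.

Lemma sorted_rcons_ltn (J : seq nat) m :
  sorted ltn (rcons J m) = all (ltn^~ m) J && sorted ltn J.
Proof. by rewrite !(sorted_pairwise ltn_trans) pairwise_rcons. Qed.

Lemma mem_iota1_pred i n : (i \in iota 1 n.-1) = (0 < i < n).
Proof. by rewrite mem_iota add1n; case: n => [|n] //; case: i. Qed.

Lemma mem_descents w i :
  (i \in descents w) = (0 < i < size w) && (nth 0 w i < nth 0 w i.-1).
Proof. by rewrite mem_filter mem_iota1_pred andbC. Qed.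

Lemma sorted_descents w : sorted ltn (descents w).
Proof. exact/sorted_filter/iota_ltn_sorted/ltn_trans. Qed.

Lemma descents_nil w : uniq w -> (descents w == [::]) = sorted ltn w.
Proof.
move=> uw; apply/eqP/(sortedP 0) => [no_des i lt_i | inc].
  have : i.+1 \notin descents w by rewrite no_des.
  rewrite mem_descents lt_i -leqNgt leq_eqVlt eq_sym => /orP[|//].
  by rewrite nth_uniq ?(ltnW lt_i) // eqn_leq ltnn.
rewrite -(filter_pred0 (iota 1 (size w).-1)); apply: eq_in_filter => i.
rewrite mem_iota1_pred; case: i => //= i lt_i.
by apply/negbTE; rewrite -leqNgt; exact/ltnW/inc.
Qed.

Lemma descents_map_mono (f : nat -> nat) w :
  {in w &, {mono f : x y / x < y}} -> descents (map f w) = descents w.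
Proof.
move=> f_mono; rewrite /descents size_map; apply: eq_in_filter => i.
rewrite mem_iota1_pred => /andP[i_gt0 lt_i].
have lt_pi : i.-1 < size w by rewrite (leq_trans _ lt_i) // ltnS leq_pred.
by rewrite !(nth_map 0) // f_mono ?mem_nth.
Qed.

Lemma descents_take_drop m w : 0 < m < size w ->
  [seq i <- descents w | i != m] =
  descents (take m w) ++ map (addn m) (descents (drop m w)).
Proof.
case: m => // m /= lt_m_w; rewrite /descents.
set n := size w - m.+2.
have -> : (size w).-1 = m + n.+1 by rewrite /n; lia.
have -> : (size (drop m.+1 w)).-1 = n by rewrite size_drop /n; lia.
rewrite -filter_predI iotaD add1n /= filter_cat /= eqxx /=.
rewrite -[m.+2]addn1 iotaDl filter_map size_takel; last exact: ltnW.
congr (_ ++ _); last congr map; apply: eq_in_filter => i; rewrite mem_iota.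
  rewrite add1n => /andP[_ lt_i]; rewrite /= (ltn_eqF lt_i) !nth_take //.
  exact: leq_ltn_trans (leq_pred i) lt_i.
case/andP=> i_gt0 _; rewrite /= !nth_drop.
have -> : m.+1 + i.-1 = m + i by lia.
by rewrite -[X in _ != X](addn0 m.+1) eqn_add2l -lt0n i_gt0.
Qed.

Lemma filter_neq_max_eq (s J : seq nat) m : sorted ltn s -> sorted ltn (rcons J m) ->
  ([seq i <- s | i != m] == J) = (s == rcons J m) || (s == J).
Proof.
move=> s_sorted; rewrite sorted_rcons_ltn => /andP[J_lt J_sorted].
have J_neq : all (predC1 m) J by apply: sub_all J_lt => i /ltn_eqF /negbT.
apply/eqP/orP => [s_J | [] /eqP ->]; last 2 first.
- by rewrite filter_rcons eqxx; apply/all_filterP.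
- exact/all_filterP.
have mem_s i : (i \in s) = (i \in J) || (m \in s) && (i == m).
  rewrite -s_J mem_filter; case: eqVneq => [->|_] /=; by rewrite ?andbT ?andbF ?orbF.
case: (boolP (m \in s)) => m_s; [left | right]; apply/eqP.
  apply: (irr_sorted_eq ltn_trans ltnn) => //; first by rewrite sorted_rcons_ltn J_lt.
  by move=> i; rewrite mem_s mem_rcons in_cons m_s orbC.
by rewrite -s_J; apply/esym/all_filterP/allP => i i_s; apply: contraNneq m_s => <-.
Qed.

Lemma descents_rcons_or (J : seq nat) m w :
  sorted ltn (rcons J m) -> 0 < m < size w -> uniq w ->
  (descents w == rcons J m) || (descents w == J) =
  (descents (take m w) == J) && sorted ltn (drop m w).
Proof.
move=> Jm_sorted m_w w_uniq.
have J_lt : all (ltn^~ m) J by move: Jm_sorted; rewrite sorted_rcons_ltn => /andP[].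
rewrite -filter_neq_max_eq ?sorted_descents // descents_take_drop //.
rewrite -descents_nil ?drop_uniq //.
apply/eqP/andP => [|[/eqP <- /eqP ->]]; last by rewrite cats0.
case: (descents (drop m w)) => [|d D]; first by rewrite cats0 => ->.
move=> take_drop_J; have : m + d \in J by rewrite -take_drop_J mem_cat mem_head orbT.
by move/(allP J_lt); rewrite /= ltnNge leq_addr.
Qed.

Lemma uniq_flatten_map (S T : eqType) (F : S -> seq T) (r : seq S) :
  uniq r -> {in r, forall a, uniq (F a)} ->
  {in r &, forall a b y, y \in F a -> y \in F b -> a = b} ->
  uniq (flatten (map F r)).
Proof.
elim: r => //= a r IHr /andP[a_r r_uniq] F_uniq F_disj.
rewrite cat_uniq F_uniq ?mem_head // IHr //; first last.
- by move=> b c b_r c_r; apply: F_disj; rewrite inE ?b_r ?c_r orbT.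
- by move=> b b_r; apply: F_uniq; rewrite inE b_r orbT.
rewrite andbT; apply/hasPn => y /flatten_mapP[b b_r y_Fb]; apply/negP => y_Fa.
by move: a_r; rewrite (F_disj a b _ _ y) ?inE ?b_r ?eqxx ?orbT.
Qed.

Section Arrangements.
Variable T : eqType.
Implicit Types (s t u : seq T) (k : nat).

Fixpoint subseqs s k : seq (seq T) :=
  match s, k with
  | _, 0 => [:: [::]]
  | [::], _.+1 => [::]
  | x :: s', k'.+1 => map (cons x) (subseqs s' k') ++ subseqs s' k
  end.

Lemma size_subseqs s k : size (subseqs s k) = 'C(size s, k).
Proof.
by elim: s k => [|x s IHs] [|k] //=; rewrite size_cat size_map !IHs binS addnC.
Qed.

Lemma mem_subseqs s k t : (t \in subseqs s k) = subseq t s && (size t == k).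
Proof.
elim: s k t => [|x s IHs] [|k] [|y t] //=; rewrite ?sub0seq ?mem_cat ?in_nil //.
- by rewrite inE andbF.
- by rewrite IHs andbF orbF; apply/mapP => -[].
rewrite eqSS; case: eqVneq => [->|y_x].
  have -> : (x :: t \in map (cons x) (subseqs s k)) = (t \in subseqs s k).
    by apply/mapP/idP => [[t' t'_in [->]] | t_in] //; exists t.
  rewrite !IHs /= eqSS -andb_orl orb_idr // => xt_s.
  exact: subseq_trans (subseq_cons t x) xt_s.
have /negbTE -> : y :: t \notin map (cons x) (subseqs s k).
  by apply/mapP => -[t' _ [y_x']]; rewrite y_x' eqxx in y_x.
by rewrite IHs.
Qed.

Lemma subseqs_uniq s k : uniq s -> uniq (subseqs s k).
Proof.
elim: s k => [|x s IHs] [|k] //= /andP[x_s s_uniq].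
rewrite cat_uniq map_inj_uniq ?IHs ?andbT //=; last by move=> a b [].
apply/hasPn => t; rewrite mem_subseqs => /andP[t_s _].
apply/mapP => -[t' _ t_eq]; move: t_s; rewrite t_eq => /mem_subseq/(_ x (mem_head _ _)).
exact/negP.
Qed.

Definition arrangements s k : seq (seq T) :=
  flatten [seq permutations a | a <- subseqs s k].

Lemma mem_arrangements s k u : uniq s ->
  (u \in arrangements s k) = [&& uniq u, size u == k & all (mem s) u].
Proof.
move=> s_uniq; apply/flatten_mapP/and3P => [[a] | [u_uniq u_k /allP u_s]].
  rewrite mem_subseqs mem_permutations => /andP[a_s /eqP <-] u_a.
  rewrite (perm_uniq u_a) (subseq_uniq a_s) // (perm_size u_a) eqxx.
  by split => //; apply/allP => x; rewrite (perm_mem u_a) => /(mem_subseq a_s).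
have u_a : perm_eq u [seq x <- s | x \in u].
  rewrite uniq_perm ?filter_uniq // => x.
  by rewrite mem_filter; case: (boolP (x \in u)) => //= /u_s.
exists [seq x <- s | x \in u]; last by rewrite mem_permutations.
by rewrite mem_subseqs filter_subseq -(perm_size u_a).
Qed.

Lemma arrangements_uniq s k : uniq s -> uniq (arrangements s k).
Proof.
move=> s_uniq; apply: uniq_flatten_map => [|a _|a b];
  rewrite ?subseqs_uniq ?permutations_uniq //.
rewrite !mem_subseqs => /andP[a_s _] /andP[b_s _] u.
rewrite !mem_permutations => u_a u_b.
rewrite (subseq_uniqP s_uniq a_s) (subseq_uniqP s_uniq b_s).
by apply: eq_filter => x; rewrite -(perm_mem u_a) -(perm_mem u_b).
Qed.

Lemma take_arrangements_cat s k u t :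
  uniq s -> u \in arrangements s k -> take k (u ++ t) = u.
Proof.
by move=> s_uniq; rewrite mem_arrangements // => /and3P[_ /eqP <- _]; rewrite take_size_cat.
Qed.

Lemma perm_cat_filter_notin s u : uniq s -> uniq u -> {subset u <= s} ->
  perm_eq (u ++ [seq x <- s | x \notin u]) s.
Proof.
move=> s_uniq u_uniq u_s; apply: uniq_perm => // [|x].
  rewrite cat_uniq u_uniq filter_uniq // andbT.
  by apply/hasPn => x; rewrite mem_filter => /andP[].
by rewrite mem_cat mem_filter; case: (boolP (x \in u)) => //= /u_s.
Qed.

End Arrangements.

Lemma perm_sorted_drop_arrangements (s : seq nat) m : sorted ltn s -> m <= size s ->
  perm_eq [seq w <- permutations s | sorted ltn (drop m w)]
          [seq u ++ [seq x <- s | x \notin u] | u <- arrangements s m].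
Proof.
move=> s_sorted m_s; have s_uniq := sorted_uniq ltn_trans ltnn s_sorted.
apply: uniq_perm; first by rewrite filter_uniq ?permutations_uniq.
  rewrite map_inj_in_uniq ?arrangements_uniq // => u v u_in v_in uv.
  by rewrite -(take_arrangements_cat [seq x <- s | x \notin u] s_uniq u_in) uv
             (take_arrangements_cat _ s_uniq v_in).
move=> w; rewrite mem_filter mem_permutations.
apply/andP/mapP => [[w_drop w_s] | [u u_in ->]]; last first.
  move: (u_in); rewrite mem_arrangements // => /and3P[u_uniq /eqP <- /allP u_s].
  by rewrite drop_size_cat ?sorted_filter ?perm_cat_filter_notin //; apply: ltn_trans.
have w_uniq : uniq w by rewrite (perm_uniq w_s).
have take_s : {subset take m w <= s} by move=> x /mem_take; rewrite (perm_mem w_s).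
exists (take m w).
  rewrite mem_arrangements // take_uniq // size_takel ?(perm_size w_s) // eqxx.
  exact/allP.
rewrite -{1}(cat_take_drop m w); congr (_ ++ _).
have drop_perm : perm_eq (drop m w) [seq x <- s | x \notin take m w].
  rewrite -(perm_cat2l (take m w)) cat_take_drop (perm_trans w_s) //.
  by rewrite perm_sym perm_cat_filter_notin ?take_uniq.
apply: (irr_sorted_eq ltn_trans ltnn _ _ (perm_mem drop_perm)) => //.
by apply: sorted_filter => //; apply: ltn_trans.
Qed.

Lemma count_take_sorted_drop (P : pred (seq nat)) s m : sorted ltn s -> m <= size s ->
  count (fun w => P (take m w) && sorted ltn (drop m w)) (permutations s) =
  sumn [seq count P (permutations a) | a <- subseqs s m].
Proof.
move=> s_sorted m_s; have s_uniq := sorted_uniq ltn_trans ltnn s_sorted.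
rewrite -[LHS]/(count (predI (P \o take m) _) _) -count_filter.
rewrite (seq.permP (perm_sorted_drop_arrangements s_sorted m_s)) count_map.
rewrite (eq_in_count (a2 := P)); last first.
  by move=> u u_in; rewrite /= (take_arrangements_cat _ s_uniq u_in).
by rewrite count_flatten -map_comp.
Qed.

Lemma perm_permutations_nth (T : eqType) (x0 : T) a : uniq a ->
  perm_eq (permutations a) (map (map (nth x0 a)) (permutations (iota 0 (size a)))).
Proof.
move=> a_uniq; apply: uniq_perm; rewrite ?permutations_uniq //.
  rewrite map_inj_in_uniq ?permutations_uniq // => t t'.
  have in_range Is : Is \in permutations (iota 0 (size a)) -> all (gtn (size a)) Is.
    rewrite mem_permutations => /perm_mem Is_iota.
    by apply/allP => i; rewrite Is_iota mem_iota.
  move=> /in_range t_lt /in_range t'_lt; apply: (inj_in_map (A := gtn (size a))) => //.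
  by move=> i j i_lt j_lt /eqP; rewrite nth_uniq // => /eqP.
move=> w; rewrite mem_permutations.
apply/(perm_iotaP x0)/mapP => -[Is Is_iota ->]; exists Is => //.
  by rewrite mem_permutations.
by rewrite -mem_permutations.
Qed.

Lemma count_descents_permutations J a : sorted ltn a ->
  count (fun u => descents u == J) (permutations a) = des_count J (size a).
Proof.
move=> a_sorted; have a_uniq := sorted_uniq ltn_trans ltnn a_sorted.
rewrite des_count_permutations (seq.permP (perm_permutations_nth 0 a_uniq)) count_map.
apply: eq_in_count => t; rewrite mem_permutations => /perm_mem t_iota /=.
have nth_mono := leqW_mono_in (leq_mono_in (sorted_ltn_nth ltn_trans 0 a_sorted)).
rewrite descents_map_mono //; apply: sub_in2 nth_mono => i.
by rewrite t_iota mem_iota.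
Qed.

Lemma des_count_nil n : des_count [::] n = 1.
Proof.
rewrite des_count_permutations (eq_in_count (a2 := pred1 (iota 0 n))).
  by rewrite (count_uniq_mem _ (permutations_uniq _)) mem_permutations perm_refl.
move=> w; rewrite mem_permutations => w_iota.
rewrite descents_nil ?(perm_uniq w_iota) ?iota_uniq //.
apply/idP/eqP => [w_sorted | ->]; last exact: iota_ltn_sorted.
exact: irr_sorted_eq ltn_trans ltnn _ _ w_sorted (iota_ltn_sorted 0 n) (perm_mem w_iota).
Qed.

Lemma des_count_rcons J m n : sorted ltn (rcons J m) -> 0 < m < n ->
  des_count (rcons J m) n + des_count J n = 'C(n, m) * des_count J m.
Proof.
move=> Jm_sorted /andP[m_gt0 lt_m_n].
rewrite [des_count _ n]des_count_permutations [des_count J n]des_count_permutations.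
rewrite -count_predUI.
rewrite [count (predI _ _) _](@eq_count _ _ pred0) ?count_pred0 ?addn0; last first.
  move=> w /=; case: eqP => // ->; apply/negbTE/eqP => /(congr1 size).
  by rewrite size_rcons; lia.
rewrite (eq_in_count (a2 := fun w => (descents (take m w) == J) && sorted ltn (drop m w))).
  rewrite (count_take_sorted_drop (fun u => descents u == J) (iota_ltn_sorted 0 n));
    last by rewrite size_iota ltnW.
  have /all_pred1P -> : all (pred1 (des_count J m))
      [seq count (fun u => descents u == J) (permutations a) | a <- subseqs (iota 0 n) m].
    apply/allP => _ /mapP[a a_in ->]; move: a_in.
    rewrite mem_subseqs => /andP[a_iota /eqP a_m] /=.
    rewrite count_descents_permutations ?a_m //.
    by rewrite (subseq_sorted ltn_trans a_iota) ?iota_ltn_sorted.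
  by rewrite sumn_nseq size_map size_subseqs size_iota mulnC.
move=> w; rewrite mem_permutations => w_iota; apply: descents_rcons_or => //.
  by rewrite m_gt0 (perm_size w_iota) size_iota.
by rewrite (perm_uniq w_iota) iota_uniq.
Qed.

Import GRing.Theory Num.Theory.
Local Open Scope ring_scope.

Definition ffact_poly (R : nzRingType) m : {poly R} := \prod_(i < m) ('X - i%:R%:P).

Lemma horner_ffact_poly (R : comNzRingType) m n : (ffact_poly R m).[n%:R] = (n ^_ m)%:R.
Proof.
elim: m => [|m IHm]; first by rewrite /ffact_poly big_ord0 hornerC.
rewrite /ffact_poly big_ord_recr hornerM -/(ffact_poly R m) IHm hornerXsubC.
rewrite ffactnSr natrM; case: (leqP m n) => [m_n | n_m]; first by rewrite natrB.
by rewrite ffact_small // !mul0r.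
Qed.

Unset Implicit Arguments.

Theorem lemma3p8 (I : seq nat) (hI : sorted ltn I) (hpos : all (fun i => 0 < i)%N I) :
  exists p : {poly rat},
    (forall n : nat, (maxI I < n)%N -> p.[n%:R] = (des_count I n)%:R) /\
    p.[0] = (-1) ^+ size I.
Proof.
elim/last_ind: I hI hpos => [|J m IHJ] Jm_sorted Jm_pos.
  by exists 1; split=> [n _|]; rewrite hornerC ?des_count_nil.
move: (Jm_sorted); rewrite sorted_rcons_ltn => /andP[J_lt J_sorted].
move: Jm_pos; rewrite all_rcons => /andP[m_gt0 J_pos].
have [p [p_eval p0]] := IHJ J_sorted J_pos.
have maxJ_le : (maxI J <= m)%N.
  by apply/bigmax_leqP_seq => i i_J _; apply/ltnW/(allP J_lt).
have -> : maxI (rcons J m) = m by rewrite /maxI big_rcons; apply/maxn_idPr.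
exists ((des_count J m)%:R / m`!%:R *: ffact_poly _ m - p); split=> [n lt_m_n|].
  rewrite hornerD hornerN hornerZ horner_ffact_poly p_eval ?(leq_ltn_trans maxJ_le) //.
  rewrite -bin_ffact natrM mulrA mulrAC divfK ?pnatr_eq0 -?lt0n ?fact_gt0 //.
  by rewrite -natrM mulnC -des_count_rcons ?m_gt0 // natrD addrK.
rewrite hornerD hornerN hornerZ (horner_ffact_poly _ m 0) ffact0n.
by rewrite eqn0Ngt m_gt0 mulr0 add0r p0 size_rcons exprS mulN1r.
Qed.
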